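(* Let $\mathcal H_m$ denote the set of $2$-regular graphs on $m$ vertices containing no subgraph isomorphic to $K_{2,2}$ (i.e., disjoint unions of cycles, none of length $4$), and let $$\mathcal G_n = \{K_1 * (K_1 + H) : H \in \mathcal H_{n-2}\} \cup \{K_1 * (K_2 + H) : H \in \mathcal H_{n-3}\} \cup \{K_1 * (P_4 + H) : H \in \mathcal H_{n-5}\}.$$ Then every graph in $\mathcal G_n$ is $K_{2,3}$-saturated and has exactly $2n-3$ edges.
   Context: All graphs are finite and simple. $K_m$ is the complete graph and $P_m$ the path on $m$ vertices. For graphs $G,H$ on disjoint vertex sets, $G+H$ is their disjoint union, and the join $G*H$ is obtained from $G+H$ by adding all edges $xy$ with $x \in V(G)$, $y \in V(H)$. A graph $G$ is $K_{2,3}$-saturated if $G$ contains no subgraph isomorphic to $K_{2,3}$, but for every pair of nonadjacent vertices $u,v$, the graph $G+uv$ contains a subgraph isomorphic to $K_{2,3}$. *)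

From mathcomp Require Import all_boot.
Set Implicit Arguments. Unset Strict Implicit. Unset Printing Implicit Defensive.

Definition simple_graph (T : finType) (e : rel T) : Prop :=
  symmetric e /\ irreflexive e.

Definition edges (T : finType) (e : rel T) : {set {set T}} :=
  [set [set p.1; p.2] | p in [set p : T * T | e p.1 p.2]].

Definition has_subgraph (F T : finType) (eF : rel F) (e : rel T) : Prop :=
  exists f : F -> T, injective f /\ forall x y, eF x y -> e (f x) (f y).

Definition Kbip (s t : nat) : rel ('I_s + 'I_t)%type :=
  fun x y => match x, y with
             | inl _, inr _ | inr _, inl _ => true
             | _, _ => false
             end.

Arguments Kbip : clear implicits.

Definition Kcomp (m : nat) : rel 'I_m := fun x y => x != y.
Definition Path (m : nat) : rel 'I_m :=
  fun x y => (x.+1 == y :> nat) || (y.+1 == x :> nat).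

Arguments Kcomp : clear implicits.
Arguments Path : clear implicits.

Definition dunion (A B : finType) (eA : rel A) (eB : rel B) : rel (A + B)%type :=
  fun x y => match x, y with
             | inl a, inl a' => eA a a'
             | inr b, inr b' => eB b b'
             | _, _ => false
             end.
Definition gjoin (A B : finType) (eA : rel A) (eB : rel B) : rel (A + B)%type :=
  fun x y => match x, y with
             | inl a, inl a' => eA a a'
             | inr b, inr b' => eB b b'
             | _, _ => true
             end.

Definition add_edge (T : finType) (e : rel T) (u v : T) : rel T :=
  fun x y => [|| e x y, (x == u) && (y == v) | (x == v) && (y == u)].

Definition K23_saturated (T : finType) (e : rel T) : Prop :=
  ~ has_subgraph (Kbip 2 3) e /\
  forall u v : T, u != v -> ~~ e u v -> has_subgraph (Kbip 2 3) (add_edge e u v).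

Definition two_regular (T : finType) (e : rel T) : Prop :=
  forall v : T, #|[set w | e v w]| = 2.

Definition in_Hfam (m : nat) (H : rel 'I_m) : Prop :=
  simple_graph H /\ two_regular H /\ ~ has_subgraph (Kbip 2 2) H.

From mathcomp Require Import all_boot zify.
Set Implicit Arguments. Unset Strict Implicit. Unset Printing Implicit Defensive.

(* Let B = X + H with X one of K_1, K_2, P_4.  Every vertex of B has degree at most 2
   and two vertices of B share at most one neighbour (for H this is the absence of
   C_4 = K_{2,2}).  Hence in the cone K_1 * B two vertices have at most two common
   neighbours, and there is no K_{2,3}.  The only non-edges of the cone are non-edges
   uv of B; either u or v has two neighbours (always so in H), or u and v are the ends
   of a path u c w v (the ends of P_4), and in both cases the apex completes a K_{2,3}
   once uv is added.  Finally, the degree sum of the cone is 2|B| plus that of B,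
   i.e. 2(|X| + m) + 2|E(X)| + 2m, which gives 2n - 3 edges. *)

Section Degrees.
Variable T : finType.
Implicit Types (e : rel T) (x y : T).

Definition deg e x := #|[set y | e x y]|.
Definition codeg e x y := #|[set z | e x z & e y z]|.
Definition deg_le e k := forall x, deg e x <= k.
Definition codeg_le e k := forall x y, x != y -> codeg e x y <= k.

Lemma codegC e x y : codeg e x y = codeg e y x.
Proof. by rewrite /codeg; under eq_finset => z do rewrite andbC. Qed.

Lemma card_set_sum (P : pred T) : #|[set x | P x]| = \sum_x P x.
Proof. by rewrite -sum1dep_card big_mkcond; apply: eq_bigr => x _; case: (P x). Qed.

Lemma has_subgraph_subrel (F : finType) (eF : rel F) e e' :
  subrel e e' -> has_subgraph eF e -> has_subgraph eF e'.
Proof. by move=> ee' [f [inj_f hom_f]]; exists f; split=> // a b /hom_f /ee'. Qed.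

Lemma has_Kbip e s t (a : 'I_s -> T) (c : 'I_t -> T) :
  simple_graph e -> injective a -> injective c -> (forall i j, e (a i) (c j)) ->
  has_subgraph (Kbip s t) e.
Proof.
move=> [sym_e irr_e] inj_a inj_c ac.
exists (fun z => match z with inl i => a i | inr j => c j end); split.
- move=> [i|j] [i'|j'] /= E.
  + by rewrite (inj_a _ _ E).
  + by have := ac i j'; rewrite E irr_e.
  + by have := ac i' j; rewrite E irr_e.
  + by rewrite (inj_c _ _ E).
- by move=> [i|j] [i'|j'] //= _; rewrite // sym_e.
Qed.

Lemma has_Kbip_allrel e (xs ys : seq T) :
  simple_graph e -> uniq xs -> uniq ys -> allrel e xs ys ->
  has_subgraph (Kbip (size xs) (size ys)) e.
Proof.
move=> simple_e /(tuple_uniqP (in_tuple xs)) inj_xs /(tuple_uniqP (in_tuple ys)) inj_ys.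
move=> /allrelP exy.
by apply: has_Kbip inj_xs inj_ys _ => // i j; apply: exy; apply: mem_tnth.
Qed.

Lemma Kbip2_free_codeg_le e t :
  simple_graph e -> ~ has_subgraph (Kbip 2 t.+1) e <-> codeg_le e t.
Proof.
move=> simple_e; split=> [free x y xy | bound [f [inj_f hom_f]]].
  rewrite leqNgt; apply/negP => big; apply: free.
  pose c j := enum_val (A := [set z | e x z & e y z]) (widen_ord big j).
  apply: (has_Kbip (a := tnth [tuple x; y]) (c := c)) => //.
  - by apply/tuple_uniqP; rewrite /= inE andbT.
  - by move=> i j /enum_val_inj /(congr1 val) /= /val_inj.
  - move=> i j; have := enum_valP (widen_ord big j); rewrite inE => /andP[ex ey].
    by case: i => [[|[|//]] ?].
set x := f (inl ord0); set y := f (inl ord_max).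
have xy : x != y by rewrite (inj_eq inj_f).
have common : [set f (inr j) | j : 'I_t.+1] \subset [set z | e x z & e y z].
  by apply/subsetP => _ /imsetP[j _ ->]; rewrite inE !hom_f.
have := leq_trans (subset_leq_card common) (bound _ _ xy).
by rewrite card_imset ?card_ord ?ltnn // => j j' /inj_f [].
Qed.

End Degrees.

Lemma handshake (T : finType) (e : rel T) :
  simple_graph e -> \sum_x deg e x = 2 * #|edges e|.
Proof.
move=> [sym_e irr_e].
have fibre a b : e a b ->
    [set p : T * T | e p.1 p.2 & [set p.1; p.2] == [set a; b]] = [set (a, b); (b, a)].
  move=> eab; apply/setP => [[x y]]; rewrite !inE /= !xpair_eqE.
  apply/idP/idP => [/andP[exy /eqP E] | /orP[] /andP[/eqP -> /eqP ->]]; last 2 first.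
  - by rewrite eab eqxx.
  - by rewrite sym_e eab setUC eqxx.
  have xy : x != y by apply: contraTneq exy => ->; rewrite irr_e.
  have : x \in [set a; b] by rewrite -E !inE eqxx.
  have : y \in [set a; b] by rewrite -E !inE eqxx orbT.
  by rewrite !inE => /orP[] /eqP ? /orP[] /eqP ?; subst; rewrite ?eqxx ?orbT in xy *.
transitivity (\sum_x \sum_(y | e x y) 1).
  by apply: eq_bigr => x _; rewrite sum1dep_card.
rewrite pair_big_dep /=.
rewrite (partition_big (fun p : T * T => [set p.1; p.2]) (mem (edges e))) /=; last first.
  by move=> p ep; apply/imsetP; exists p; rewrite ?inE.
rewrite mulnC -sum_nat_const; apply: eq_bigr => _ /imsetP[[a b] eab ->].
rewrite inE /= in eab.
have ab : a != b by apply: contraTneq eab => ->; rewrite irr_e.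
by rewrite sum1dep_card fibre // cards2 xpair_eqE (negbTE ab).
Qed.

Lemma card_set_sumType (A B : finType) (P : pred (A + B)) :
  #|[set z | P z]| = #|[set a | P (inl a)]| + #|[set b | P (inr b)]|.
Proof. by rewrite !card_set_sum big_sumType. Qed.

Definition path3 (T : finType) (e : rel T) (u v : T) :=
  exists c w, [/\ e u c, e c w, e w v, w != u & c != v].

(* In the cone over e the edge uv closes a K_{2,3}: on {apex, u} | {u1, u2, v}
   if u has two neighbours u1, u2, and on {u, w} | {c, v, apex} if u c w v is a path. *)
Definition cone_saturating (T : finType) (e : rel T) :=
  forall u v, u != v -> ~~ e u v ->
  [\/ 1 < deg e u, 1 < deg e v, path3 e u v | path3 e v u].

Section JoinUnion.
Variables (A B : finType) (eA : rel A) (eB : rel B).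

Lemma simple_gjoin : simple_graph eA -> simple_graph eB -> simple_graph (gjoin eA eB).
Proof.
move=> [sA iA] [sB iB]; split; first by move=> [a|b] [a'|b'] /=.
by move=> [a|b] /=.
Qed.

Lemma simple_dunion : simple_graph eA -> simple_graph eB -> simple_graph (dunion eA eB).
Proof.
move=> [sA iA] [sB iB]; split; first by move=> [a|b] [a'|b'] /=.
by move=> [a|b] /=.
Qed.

Lemma deg_gjoin_inl a : deg (gjoin eA eB) (inl a) = deg eA a + #|B|.
Proof. by rewrite /deg card_set_sumType cardsT. Qed.

Lemma deg_gjoin_inr b : deg (gjoin eA eB) (inr b) = #|A| + deg eB b.
Proof. by rewrite /deg card_set_sumType cardsT. Qed.

Lemma codeg_gjoin_inl_inr a b : codeg (gjoin eA eB) (inl a) (inr b) = deg eA a + deg eB b.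
Proof. by rewrite /codeg card_set_sumType /=; under eq_finset => a' do rewrite andbT. Qed.

Lemma codeg_gjoin_inr b b' : codeg (gjoin eA eB) (inr b) (inr b') = #|A| + codeg eB b b'.
Proof. by rewrite /codeg card_set_sumType cardsT. Qed.

Lemma deg_sum_gjoin :
  \sum_z deg (gjoin eA eB) z = \sum_a deg eA a + \sum_b deg eB b + 2 * (#|A| * #|B|).
Proof.
rewrite big_sumType /=.
under eq_bigr => a _ do rewrite deg_gjoin_inl.
under [X in _ + X]eq_bigr => b _ do rewrite deg_gjoin_inr.
rewrite !big_split /= !sum_nat_const !cardT; lia.
Qed.

Lemma deg_dunion_inl a : deg (dunion eA eB) (inl a) = deg eA a.
Proof. by rewrite /deg card_set_sumType cards0 addn0. Qed.

Lemma deg_dunion_inr b : deg (dunion eA eB) (inr b) = deg eB b.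
Proof. by rewrite /deg card_set_sumType cards0. Qed.

Lemma deg_le_dunion k : deg_le eA k -> deg_le eB k -> deg_le (dunion eA eB) k.
Proof. by move=> dA dB [a|b]; rewrite (deg_dunion_inl, deg_dunion_inr). Qed.

Lemma codeg_le_dunion k : codeg_le eA k -> codeg_le eB k -> codeg_le (dunion eA eB) k.
Proof.
have mixed a b : codeg (dunion eA eB) (inl a) (inr b) = 0.
  by apply/eqP; rewrite cards_eq0; apply/eqP/setP => [[?|?]]; rewrite !inE ?andbF.
move=> cA cB [a|b] [a'|b'] //= neq.
- by rewrite /codeg card_set_sumType cards0 addn0; apply: cA.
- by rewrite mixed.
- by rewrite codegC mixed.
- by rewrite /codeg card_set_sumType cards0; apply: cB.
Qed.

Lemma deg_sum_dunion : \sum_z deg (dunion eA eB) z = \sum_a deg eA a + \sum_b deg eB b.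
Proof.
rewrite big_sumType; congr (_ + _); apply: eq_bigr => x _.
  exact: deg_dunion_inl.
exact: deg_dunion_inr.
Qed.

Lemma path3_dunion_inl a a' : path3 eA a a' -> path3 (dunion eA eB) (inl a) (inl a').
Proof. by case=> c [w [? ? ? ? ?]]; exists (inl c), (inl w). Qed.

Lemma cone_saturating_dunion :
  cone_saturating eA -> (forall b, 1 < deg eB b) -> cone_saturating (dunion eA eB).
Proof.
move=> sA dB [a|b] [a'|b'] //= neq nadj; rewrite ?deg_dunion_inl ?deg_dunion_inr.
- case: (sA a a' neq nadj) => h; [exact: Or41 | exact: Or42 | apply: Or43 | apply: Or44];
  exact: path3_dunion_inl.
- exact/Or42/dB.
- exact/Or41/dB.
- exact/Or41/dB.
Qed.

End JoinUnion.

Section Complete.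
Variable n : nat.

Lemma simple_Kcomp : simple_graph (Kcomp n).
Proof. by split=> [x y|x]; rewrite /Kcomp ?eqxx // eq_sym. Qed.

Lemma deg_Kcomp x : deg (Kcomp n) x = n.-1.
Proof.
rewrite /deg (_ : [set y | _] = [set~ x]) ?cardsC1 ?card_ord //.
by apply/setP => y; rewrite !inE eq_sym.
Qed.

Lemma codeg_Kcomp x y : x != y -> codeg (Kcomp n) x y = n - 2.
Proof.
move=> xy; have := cardsC [set x; y]; rewrite cards2 xy card_ord.
rewrite /codeg (_ : [set z | _ & _] = ~: [set x; y]); first lia.
by apply/setP => z; rewrite !inE negb_or ![z == _]eq_sym.
Qed.

Lemma cone_saturating_Kcomp : cone_saturating (Kcomp n).
Proof. by move=> x y xy; rewrite /Kcomp xy. Qed.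

Lemma deg_sum_Kcomp : \sum_x deg (Kcomp n) x = n * n.-1.
Proof.
by rewrite (eq_bigr _ (fun x _ => deg_Kcomp x)) sum_nat_const cardT size_enum_ord.
Qed.

End Complete.

Lemma simple_Path n : simple_graph (Path n).
Proof. by split=> [x y|x]; rewrite /Path 1?orbC // orbb (gtn_eqF (ltnSn x)). Qed.

Lemma deg_le_P4 : deg_le (Path 4) 2.
Proof. by move=> [[|[|[|[|//]]]] ?]; rewrite /deg card_set_sum !big_ord_recr big_ord0. Qed.

Lemma codeg_le_P4 : codeg_le (Path 4) 1.
Proof.
by move=> [[|[|[|[|//]]]] ?] [[|[|[|[|//]]]] ?] //= _;
  rewrite /codeg card_set_sum !big_ord_recr big_ord0.
Qed.

Lemma deg_sum_P4 : \sum_x deg (Path 4) x = 6.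
Proof. by rewrite !big_ord_recr big_ord0 /deg !card_set_sum !big_ord_recr !big_ord0. Qed.

Lemma cone_saturating_P4 : cone_saturating (Path 4).
Proof.
have deg_inner (i : 'I_4) : 0 < i < 3 -> 1 < deg (Path 4) i.
  by case: i => [[|[|[|[|//]]]] ?] //= _; rewrite /deg card_set_sum !big_ord_recr big_ord0.
move=> [[|[|[|[|//]]]] ?] [[|[|[|[|//]]]] ?] //= _ _.
all: first [ by apply: Or41; apply: deg_inner | by apply: Or42; apply: deg_inner
           | by apply: Or43; exists (Ordinal (isT : 1 < 4)), (Ordinal (isT : 2 < 4))
           | by apply: Or44; exists (Ordinal (isT : 1 < 4)), (Ordinal (isT : 2 < 4)) ].
Qed.

Section AddEdge.
Variables (T : finType) (e : rel T).

Lemma simple_add_edge u v : simple_graph e -> u != v -> simple_graph (add_edge e u v).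
Proof.
move=> [sym_e irr_e] uv; split=> [x y|x]; rewrite /add_edge.
  by rewrite sym_e [(y == u) && _]andbC [(y == v) && _]andbC; congr (_ || _); apply: orbC.
by rewrite irr_e; case: (x =P u) => [->|_]; rewrite ?(negbTE uv) ?andbF.
Qed.

Lemma add_edgeC u v : subrel (add_edge e v u) (add_edge e u v).
Proof. by move=> x y; rewrite /add_edge [X in _ || X]orbC. Qed.

End AddEdge.

Notation cone e := (gjoin (Kcomp 1) e).

Section Cone.
Variables (B : finType) (e : rel B).
Hypothesis simple_e : simple_graph e.

Lemma simple_cone : simple_graph (cone e).
Proof. exact: simple_gjoin (@simple_Kcomp 1) simple_e. Qed.

Lemma codeg_le_cone k : deg_le e k.+1 -> codeg_le e k -> codeg_le (cone e) k.+1.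
Proof.
move=> de ce [i|x] [j|y] //=.
- by rewrite !ord1 eqxx.
- by rewrite codeg_gjoin_inl_inr deg_Kcomp => _; apply: de.
- by rewrite codegC codeg_gjoin_inl_inr deg_Kcomp => _; apply: de.
- by rewrite (inj_eq inr_inj) codeg_gjoin_inr card_ord => /ce.
Qed.

Lemma cone_add_edge_K23 u v : u != v -> ~~ e u v -> 1 < deg e u \/ path3 e u v ->
  has_subgraph (Kbip 2 3) (add_edge (cone e) (inr u) (inr v)).
Proof.
case: simple_e => sym_e irr_e uv nuv.
have simple_add : simple_graph (add_edge (cone e) (inr u) (inr v)).
  by apply: simple_add_edge simple_cone _; rewrite (inj_eq inr_inj).
case=> [|[c [w [uc cw wv wu cv]]]].
  case/card_gt1P => u1 [u2 []]; rewrite !inE => uu1 uu2 u12.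
  have u1v : u1 != v by apply: contraNneq nuv => <-.
  have u2v : u2 != v by apply: contraNneq nuv => <-.
  apply: (has_Kbip_allrel (xs := [:: inl ord0; inr u]) (ys := [:: inr u1; inr u2; inr v]))
    => //=.
  - by rewrite !inE !(inj_eq inr_inj) negb_or u12 u1v u2v.
  - by rewrite /allrel /add_edge /= uu1 uu2 !eqxx !orbT.
apply: (has_Kbip_allrel (xs := [:: inr u; inr w]) (ys := [:: inr c; inr v; inl ord0])) => //=.
- by rewrite !inE (inj_eq inr_inj) eq_sym wu.
- by rewrite !inE (inj_eq inr_inj) orbF cv.
- by rewrite /allrel /add_edge /= uc (sym_e w c) cw wv !eqxx !orbT.
Qed.

Lemma K23_saturated_cone :
  deg_le e 2 -> codeg_le e 1 -> cone_saturating e -> K23_saturated (cone e).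
Proof.
move=> de ce sat_e; split.
  by apply/Kbip2_free_codeg_le; [exact: simple_cone | exact: codeg_le_cone].
move=> [i|x] [j|y] //=; first by rewrite !ord1 eqxx.
rewrite (inj_eq inr_inj) => xy nxy.
have yx : y != x by rewrite eq_sym.
have nyx : ~~ e y x by case: simple_e => sym_e _; rewrite sym_e.
have swapped : 1 < deg e y \/ path3 e y x ->
    has_subgraph (Kbip 2 3) (add_edge (cone e) (inr x) (inr y)).
  move=> h; apply: has_subgraph_subrel (cone_add_edge_K23 yx nyx h).
  exact: add_edgeC.
case: (sat_e x y xy nxy) => h.
- by apply: cone_add_edge_K23 xy nxy _; left.
- by apply: swapped; left.
- by apply: cone_add_edge_K23 xy nxy _; right.
- by apply: swapped; right.
Qed.

Lemma edges_cone : 2 * #|edges (cone e)| = 2 * #|B| + \sum_x deg e x.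
Proof.
rewrite -handshake; last exact: simple_cone.
by rewrite deg_sum_gjoin card_ord big1 => [|i _]; [lia | exact: deg_Kcomp].
Qed.

End Cone.

Section Hfam.
Variables (m : nat) (H : rel 'I_m).
Hypothesis H_in : in_Hfam H.

Lemma Hfam_simple : simple_graph H.
Proof. by case: H_in. Qed.

Lemma Hfam_deg v : deg H v = 2.
Proof. by case: H_in => _ [reg _]; apply: reg. Qed.

Lemma Hfam_codeg_le : codeg_le H 1.
Proof. by case: H_in => simple_H [_ K22_free]; apply/Kbip2_free_codeg_le. Qed.

Lemma Hfam_deg_sum : \sum_v deg H v = 2 * m.
Proof.
by rewrite (eq_bigr _ (fun v _ => Hfam_deg v)) sum_nat_const cardT size_enum_ord mulnC.
Qed.

End Hfam.

Lemma K23_saturated_cone_dunion k (X : rel 'I_k) m (H : rel 'I_m) :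
  in_Hfam H -> simple_graph X -> deg_le X 2 -> codeg_le X 1 -> cone_saturating X ->
  K23_saturated (cone (dunion X H)) /\
  2 * #|edges (cone (dunion X H))| = 2 * (k + 2 * m) + \sum_x deg X x.
Proof.
move=> H_in simple_X dX cX sX.
have simple_XH := simple_dunion simple_X (Hfam_simple H_in).
split.
  apply: K23_saturated_cone => //.
  - by apply: deg_le_dunion dX _ => v; rewrite Hfam_deg.
  - exact: codeg_le_dunion cX (Hfam_codeg_le H_in).
  - by apply: cone_saturating_dunion sX _ => v; rewrite Hfam_deg.
rewrite edges_cone // deg_sum_dunion (Hfam_deg_sum H_in) (card_sum (ordinal k) (ordinal m)).
by rewrite !card_ord; lia.
Qed.

Theorem mainTheorem2 :
  forall (m : nat) (H : rel 'I_m), in_Hfam H ->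
    (* n = m + 2 : K_1 * (K_1 + H) *)
    (K23_saturated (gjoin (Kcomp 1) (dunion (Kcomp 1) H)) /\
     #|edges (gjoin (Kcomp 1) (dunion (Kcomp 1) H))| = 2 * (m + 2) - 3) /\
    (* n = m + 3 : K_1 * (K_2 + H) *)
    (K23_saturated (gjoin (Kcomp 1) (dunion (Kcomp 2) H)) /\
     #|edges (gjoin (Kcomp 1) (dunion (Kcomp 2) H))| = 2 * (m + 3) - 3) /\
    (* n = m + 5 : K_1 * (P_4 + H) *)
    (K23_saturated (gjoin (Kcomp 1) (dunion (Path 4) H)) /\
     #|edges (gjoin (Kcomp 1) (dunion (Path 4) H))| = 2 * (m + 5) - 3).
Proof.
move=> m H H_in.
have complete n : n <= 3 -> K23_saturated (cone (dunion (Kcomp n) H)) /\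
    2 * #|edges (cone (dunion (Kcomp n) H))| = 2 * (n + 2 * m) + n * n.-1.
  move=> n_le3; rewrite -deg_sum_Kcomp.
  apply: K23_saturated_cone_dunion H_in (@simple_Kcomp n) _ _ (@cone_saturating_Kcomp n).
  - by move=> x; rewrite deg_Kcomp; lia.
  - by move=> x y xy; rewrite codeg_Kcomp //; lia.
have [sat1 edges1] := complete 1 isT.
have [sat2 edges2] := complete 2 isT.
have [sat4 edges4] := K23_saturated_cone_dunion H_in (simple_Path 4)
  deg_le_P4 codeg_le_P4 cone_saturating_P4.
rewrite deg_sum_P4 in edges4.
by do !split=> //; lia.
Qed.
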